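(* Let $A>0$ be fixed. For $X$ large set $\rho=e^{-1/X}$, $Q=(\log X)^A$ and $\delta_q=q^{-1}X^{-1}(\log X)^A$. For $1\le a\le q\le Q$ with $(a,q)=1$ let $\mathfrak{M}(q,a)=\big(\frac aq-\delta_q,\frac aq+\delta_q\big)$, let $\mathfrak{M}$ be the union of all these intervals, and let $\mathfrak{m}=[-\frac12,\frac12)\setminus\mathfrak{M}$ (arcs understood modulo $1$). Then for $\theta\in\mathfrak{m}$, \[ \Phi_{|\mu|}(\rho\operatorname{e}(\theta))\ll_A X(\log X)^{10-A/4}. \]
   Context: $\operatorname{e}(x)=\exp(2\pi i x)$; $\mu$ is the Möbius function; for $|z|<1$, $\Phi_{|\mu|}(z):=\sum_{j=1}^\infty\sum_{n=1}^\infty\frac{|\mu(n)|}{j}z^{jn}$ (so that $\prod_{n\ge1}(1-z^n)^{-|\mu(n)|}=\exp(\Phi_{|\mu|}(z))$). $\ll_A$ means the implied constant may depend on $A$. *)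

From mathcomp Require Import ssreflect ssrbool ssrnat eqtype seq prime.
From Stdlib Require Import ZArith.

(* Moebius function mu : nat -> Z  (mu 0 := 0 by convention; unused). *)
Definition mobius (n : nat) : Z :=
  if n == 0%N then 0%Z
  else if all (fun p => logn p n == 1%N) (primes n)
       then ((-1) ^ Z.of_nat (size (primes n)))%Z
       else 0%Z.

From Stdlib Require Import Reals.
From Coquelicot Require Import Coquelicot.
Open Scope R_scope.

Definition abs_mobius (n : nat) : R := Rabs (IZR (mobius n)).

Definition e_ (x : R) : C := (cos (2 * PI * x), sin (2 * PI * x)).

Definition Phi_term (z : C) (j n : nat) : C :=
  scal (abs_mobius n / INR j) (pow_n z (j * n)).

(* Phi_{|mu|}(z) = sum_{j>=1} sum_{n>=1} |mu(n)|/j z^{jn}, computed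
   componentwise (Coquelicot's Series is real-valued). *)
Definition Phi_absmu (z : C) : C :=
  (Series (fun j => Series (fun n => fst (Phi_term z (S j) (S n)))),
   Series (fun j => Series (fun n => snd (Phi_term z (S j) (S n))))).

(* major arcs: theta lies (mod 1) within delta_q of some a/q,
   1 <= a <= q <= Q, gcd(a,q)=1, with Q = (log X)^A, delta_q = (log X)^A/(qX) *)
Definition in_major_arcs (A X theta : R) : Prop :=
  exists (q a : nat) (k : Z),
    (1 <= a)%coq_nat /\ (a <= q)%coq_nat /\ INR q <= Rpower (ln X) A /\
    Nat.gcd a q = 1%nat /\
    Rabs (theta - (INR a / INR q + IZR k)) < Rpower (ln X) A / (INR q * X).

Definition in_minor_arcs (A X theta : R) : Prop :=
  -(1/2) <= theta /\ theta < 1/2 /\ ~ in_major_arcs A X theta.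

(* Since |mu(n)| = sum_{d^2 | n} mu(d), for w = z^j
     sum_n |mu(n)| w^n = sum_d mu(d) sum_m w^(d^2 m),
   so each inner series of Phi_{|mu|}(z), z = rho e(theta), is a combination of
   geometric sums in v = z^(j d^2), and such a sum is at most 2 |v| / |1 - v|.
   If j d^2 <= (log X)^A, the minor-arc hypothesis keeps j d^2 theta at distance at
   least (log X)^A / X from the integers, so |1 - v| >= (log X)^A / X; in any case
   |v| = exp (- j d^2 / X) gives the bound 2 X / (j d^2).  Using the first bound for
   j, d <= T = floor ((log X)^(A/4)) (so that j d^2 <= T^3 <= (log X)^A) and the
   second one otherwise, the factor 1/j and the convergence of sum 1/(j d)^2 give
     Phi_{|mu|}(rho e(theta)) <= 2 X T^2 / (log X)^A + 16 X / (T + 1)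
                              << X (log X)^(-A/4). *)

From Stdlib Require Import Reals Lra Lia ZArith.
From Coquelicot Require Import Coquelicot.
From mathcomp Require Import ssreflect ssrbool ssrnat eqtype seq div prime zify.

Set Implicit Arguments.
Unset Strict Implicit.
Open Scope R_scope.

Lemma mobius_sq_dvd p d : prime p -> (p * p %| d)%N -> mobius d = 0%Z.
Proof.
move=> pr_p sq_dvd; rewrite /mobius; case: eqP => // /eqP d_neq0.
have d_gt0 : (0 < d)%N by rewrite lt0n.
have p_in : p \in primes d.
  by rewrite mem_primes pr_p d_gt0 (dvdn_trans (dvdn_mulr p (dvdnn p)) sq_dvd).
have : (2 <= logn p d)%N by rewrite -pfactor_dvdn // expnS expn1.
by case: allP => // sqfree; rewrite (eqP (sqfree p p_in)).
Qed.

Lemma mobius_eq0_sq_dvd n :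
  (0 < n)%N -> mobius n = 0%Z -> exists2 p, prime p & (p * p %| n)%N.
Proof.
move=> n_gt0; rewrite /mobius (negbTE (lt0n_neq0 n_gt0)).
case: ifP => [_ | /negbT]; first by move/Z.pow_nonzero; lia.
rewrite -has_predC => /hasP [p]; rewrite mem_primes => /and3P [pr_p _ p_dvd] /= lognp.
exists p => //; suff : (p ^ 2 %| n)%N by rewrite expnS expn1.
by rewrite pfactor_dvdn //  ltn_neqAle eq_sym lognp logn_gt0 mem_primes pr_p n_gt0.
Qed.

Lemma mobius_sq_dvd_eq1 n d :
  mobius n <> 0%Z -> (0 < d)%N -> (d * d %| n)%N -> d = 1%N.
Proof.
move=> mu_n d_gt0 sq_dvd; case: (ltngtP d 1) => [|d_gt1|//]; first by lia.
have [p pr_p p_dvd] := pdivP d_gt1.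
by case: mu_n; apply: (mobius_sq_dvd pr_p); apply: dvdn_trans (dvdn_mul p_dvd p_dvd) sq_dvd.
Qed.

Lemma mobius_mul_prime p e :
  prime p -> ~~ (p %| e)%N -> (0 < e)%N -> mobius (p * e) = (- mobius e)%Z.
Proof.
move=> pr_p p_ndvd e_gt0; have p_gt0 := prime_gt0 pr_p.
have pe_gt0 : (0 < p * e)%N by rewrite muln_gt0 p_gt0.
have primes_pe : perm_eq (primes (p * e)) (p :: primes e).
  apply: uniq_perm; first exact: primes_uniq.
    by rewrite /= primes_uniq mem_primes pr_p e_gt0 (negbTE p_ndvd).
  by move=> q; rewrite primesM // primes_prime // inE.
rewrite /mobius (negbTE (lt0n_neq0 pe_gt0)) (negbTE (lt0n_neq0 e_gt0)).
rewrite (perm_all _ primes_pe) (perm_size primes_pe) /= lognM //.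
rewrite logn_prime // eqxx (lognE p e) pr_p e_gt0 (negbTE p_ndvd) /=.
have -> : all (fun q => logn q (p * e) == 1%N) (primes e)
        = all (fun q => logn q e == 1%N) (primes e).
  apply: eq_in_all => q q_in; rewrite lognM // logn_prime //.
  suff /negbTE -> : q != p by [].
  by apply: contraNneq p_ndvd => <-; move: q_in; rewrite mem_primes => /and3P [].
case: ifP => // _; set k := size (primes e).
change (Z.pow_pos _ _) with ((-1) ^ Z.of_nat k.+1)%Z.
by rewrite Nat2Z.inj_succ Z.pow_succ_r; lia.
Qed.

Lemma abs_mobius_0_or_1 n : abs_mobius n = 0 \/ abs_mobius n = 1.
Proof.
rewrite /abs_mobius /mobius; case: eqP => _; first by left; rewrite Rabs_R0.
case: ifP => _; last by left; rewrite Rabs_R0.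
by right; rewrite Rabs_Zabs Z.abs_pow /= Z.pow_1_l //; lia.
Qed.

Lemma sum_n_m_1_0 (f : nat -> R) : sum_n_m f 1 0 = 0.
Proof. by rewrite sum_n_m_zero //; apply/ltP. Qed.

Lemma sum_n_m_1_S (f : nat -> R) D : sum_n_m f 1 D.+1 = sum_n_m f 1 D + f D.+1.
Proof. by rewrite sum_n_Sm //; apply/leP. Qed.

Lemma sum_n_m_Rplus (f g : nat -> R) m n :
  sum_n_m (fun k => f k + g k) m n = sum_n_m f m n + sum_n_m g m n.
Proof. exact: sum_n_m_plus. Qed.

Lemma sum_n_m_Rmult_l (c : R) (f : nat -> R) m n :
  sum_n_m (fun k => c * f k) m n = c * sum_n_m f m n.
Proof. exact: sum_n_m_mult_l. Qed.

Lemma sum_n_m_le_loc (a b : nat -> R) (m n : nat) :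
  (forall k : nat, (m <= k)%coq_nat /\ (k <= n)%coq_nat -> a k <= b k) ->
  sum_n_m a m n <= sum_n_m b m n.
Proof.
move=> ab; rewrite (sum_n_m_ext_loc b (fun k => Rmax (a k) (b k))).
  by apply: sum_n_m_le => k; apply: Rmax_l.
by move=> k /ab ab_k; rewrite Rmax_right.
Qed.

Lemma sum_n_m_vanishing_tail (f : nat -> R) m n K :
  (forall d, (n < d)%N -> f d = 0) -> (m <= n.+1)%N -> (n <= K)%N ->
  sum_n_m f m K = sum_n_m f m n.
Proof.
move=> f_tail mn nK; rewrite (sum_n_m_Chasles f m n K); try lia.
rewrite (sum_n_m_ext_loc f (fun _ => zero) n.+1 K) ?sum_n_m_const_zero ?plus_zero_r //.
by move=> d [nd _]; apply: f_tail; lia.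
Qed.

Lemma sum_n_m_dvd_reindex (h : nat -> R) p K : (0 < p)%N ->
  sum_n_m (fun d => if (p %| d)%N then h d else 0) 1 K
  = sum_n_m (fun e => h (p * e)%N) 1 (K %/ p).
Proof.
move=> p_gt0; elim: K => [|K IH]; first by rewrite div0n !sum_n_m_1_0.
rewrite sum_n_m_1_S IH divnS //; case: ifP => p_dvd /=; last by rewrite add0n Rplus_0_r.
have quot_succ : (K.+1 %/ p = (K %/ p).+1)%N by rewrite divnS // p_dvd.
by rewrite add1n sum_n_m_1_S -quot_succ mulnC divnK.
Qed.

Lemma sum_mobius_sq_dvd n K : (0 < n)%N -> (n <= K)%N ->
  sum_n_m (fun d => if (d * d %| n)%N then IZR (mobius d) else 0) 1 K = abs_mobius n.
Proof.
move=> n_gt0 nK; set f := fun d => if _ then _ else _.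
have f_tail d : (n < d)%N -> f d = 0.
  move=> nd; rewrite /f; case: ifP => // sq_dvd.
  by have := dvdn_leq n_gt0 sq_dvd; nia.
have [mu_n0 | mu_n] := Z.eq_dec (mobius n) 0.
- have [p pr_p sq_p] := mobius_eq0_sq_dvd n_gt0 mu_n0.
  have p_gt0 := prime_gt0 pr_p.
  set g := fun d => if (p %| d)%N then 0 else f d.
  (* Pair d = p e with e: for p not dividing e, mu (p e) = - mu e, and (p e)^2 | n iff e^2 | n. *)
  have pair_cancel e : (0 < e)%N -> f (p * e)%N + g e = 0.
    move=> e_gt0; rewrite /g; case: (boolP (p %| e)%N) => [p_dvd | p_ndvd].
      by rewrite /f (mobius_sq_dvd pr_p (dvdn_mul (dvdnn p) p_dvd)); case: ifP => _; lra.
    have cop : coprime (p * p) (e * e) by rewrite coprimeMl !coprimeMr prime_coprime // p_ndvd.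
    rewrite /f mulnACA Gauss_dvd // sq_p mobius_mul_prime //.
    by case: (e * e %| n)%N => /=; rewrite ?opp_IZR; lra.
  have f_split d : f d = (if (p %| d)%N then f d else 0) + g d.
    by rewrite /g; case: ifP => _; lra.
  have g_tail d : (n < d)%N -> g d = 0 by move=> nd; rewrite /g f_tail //; case: ifP.
  rewrite /abs_mobius mu_n0 Rabs_R0 (sum_n_m_vanishing_tail f_tail) //.
  rewrite -(@sum_n_m_vanishing_tail f 1 n (p * n)) ?leq_pmull //.
  rewrite (sum_n_m_ext _ _ _ _ f_split) sum_n_m_Rplus sum_n_m_dvd_reindex // mulKn //.
  rewrite (sum_n_m_vanishing_tail g_tail) ?leq_pmull // -sum_n_m_Rplus.
  rewrite (sum_n_m_ext_loc _ (fun _ => zero)) ?sum_n_m_const_zero //.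
  by move=> e [e_ge1 _]; apply: pair_cancel; apply/ltP.
- have f_one d : (1 < d)%N -> f d = 0.
    move=> d_gt1; rewrite /f; case: ifP => // sq_dvd.
    by have := mobius_sq_dvd_eq1 mu_n (ltnW d_gt1) sq_dvd; lia.
  rewrite sum_Sn_m; last by lia.
  rewrite (sum_n_m_ext_loc _ (fun _ => zero) 2) ?sum_n_m_const_zero ?plus_zero_r; last first.
    by move=> d [d_ge2 _]; apply: f_one; apply/ltP.
  rewrite /f dvd1n /=.
  have [mu0 | -> //] := abs_mobius_0_or_1 n.
  by case: mu_n; apply: eq_IZR; apply: Rabs_eq_0.
Qed.

Definition iverson (b : bool) : R := if b then 1 else 0.

Lemma iverson_ge0 b : 0 <= iverson b.
Proof. by case: b; rewrite /iverson; lra. Qed.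

Lemma iverson_andb a b : iverson (a && b) = iverson a * iverson b.
Proof. by case: a; case: b; rewrite /iverson /=; ring. Qed.

Lemma sum_iverson_le T D : sum_n_m (fun d => iverson (d <= T)%N) 1 D <= INR T.
Proof.
suff : sum_n_m (fun d => iverson (d <= T)%N) 1 D <= INR (minn D T).
  by move/Rle_trans; apply; apply: le_INR; apply/leP; rewrite geq_minr.
elim: D => [|D IH].
  by rewrite sum_n_m_1_0 min0n; apply: Rle_refl.
rewrite sum_n_m_1_S [iverson _]/iverson; case: ifP => DT.
  by move: IH; rewrite (minn_idPl DT) (minn_idPl (ltnW DT)) S_INR; lra.
have TD : (T <= D)%N by rewrite leqNgt DT.
by move: IH; rewrite (minn_idPr TD) (minn_idPr (leqW TD)); lra.
Qed.

Lemma sum_inv_sq_tail_le T D :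
  sum_n_m (fun d => iverson (T < d)%N / INR d ^ 2) 1 D <= 2 / INR T.+1.
Proof.
set tail := sum_n_m _ 1.
suff tail_le : tail D <= 2 / INR T.+1 - 2 / INR (maxn T D).+1.
  have : 0 < 2 / INR (maxn T D).+1 by apply: Rdiv_lt_0_compat; [lra | apply: lt_0_INR; lia].
  by lra.
elim: D => [|D IH].
  by rewrite /tail sum_n_m_1_0 maxn0; lra.
rewrite /tail sum_n_m_1_S -/(tail D) [iverson _]/iverson; case: ifP => TD.
  have TD' : (T <= D)%N := TD.
  rewrite (maxn_idPr (leqW TD')) (maxn_idPr TD') in IH *.
  have D_ge1 : 1 <= INR D.+1 by rewrite S_INR; have := pos_INR D; lra.
  suff : 1 / INR D.+1 ^ 2 <= 2 / INR D.+1 - 2 / INR D.+2 by lra.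
  rewrite [INR D.+2]S_INR; apply: (Rmult_le_reg_r (INR D.+1 ^ 2 * (INR D.+1 + 1))); first by nra.
  by field_simplify; lra.
have DT : (D < T)%N by rewrite ltnNge -ltnS TD.
by rewrite (maxn_idPl DT) (maxn_idPl (ltnW DT)) in IH *; lra.
Qed.

Lemma sum_inv_sq_le D : sum_n_m (fun d => / INR d ^ 2) 1 D <= 2.
Proof.
rewrite (sum_n_m_ext_loc _ (fun d => iverson (0 < d)%N / INR d ^ 2)).
  by apply: (Rle_trans _ _ _ (sum_inv_sq_tail_le 0 D)); rewrite /=; lra.
by move=> d [d_ge1 _]; rewrite /iverson (_ : (0 < d)%N) /=; [lra | apply/ltP].
Qed.

Lemma exp_pow x n : exp x ^ n = exp (INR n * x).
Proof.
elim: n => [|n IH]; first by rewrite Rmult_0_l exp_0.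
by rewrite S_INR /= IH -exp_plus; congr exp; ring.
Qed.

Lemma exp_neg_ratio_le u : 0 < u -> exp (- u) / (1 - exp (- u)) <= / u.
Proof.
move=> u_gt0; have exp_u := exp_ineq1_le u; have exp_inv : exp (- u) * exp u = 1.
  by rewrite -exp_plus Rplus_opp_l exp_0.
have exp_neg_pos := exp_pos (- u).
apply: (Rmult_le_reg_r ((1 - exp (- u)) * u)); first by nra.
by field_simplify; nra.
Qed.

Lemma pow_le_pow_le1 x m n : 0 <= x <= 1 -> (m <= n)%N -> x ^ n <= x ^ m.
Proof.
move=> x_bounds mn; rewrite -(subnK mn) pow_add -{2}(Rmult_1_l (x ^ m)).
apply: Rmult_le_compat_r; first by apply: pow_le; lra.
by rewrite -(pow1 (n - m)); apply: pow_incr.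
Qed.

Lemma third_le_sin a : 0 <= a <= 2 -> a / 3 <= sin a.
Proof.
move=> a_bounds; have [sin_lb _] := pre_sin_bound a 0 ltac:(lra) ltac:(lra).
by apply: Rle_trans sin_lb; rewrite /sin_approx /sin_term /=; nra.
Qed.

Lemma e_add s t : (e_ s * e_ t)%C = e_ (s + t).
Proof.
rewrite /e_ /Cmult Rmult_plus_distr_l cos_plus sin_plus.
by apply: injective_projections => /=; ring.
Qed.

Lemma e_shift_Z t (k : Z) : e_ (t + IZR k) = e_ t.
Proof.
suff e_shift_nat s (n : nat) : e_ (s + INR n) = e_ s.
  case: (Z_le_gt_dec 0 k) => k_sgn.
    by rewrite -(Z2Nat.id k) // -INR_IZR_INZ e_shift_nat.
  rewrite -(e_shift_nat _ (Z.to_nat (- k))) INR_IZR_INZ Z2Nat.id; last by lia.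
  by rewrite opp_IZR; congr e_; ring.
rewrite /e_; have -> : 2 * PI * (s + INR n) = 2 * PI * s + 2 * INR n * PI by ring.
by rewrite cos_period sin_period.
Qed.

Lemma Cmod_e t : Cmod (e_ t) = 1.
Proof.
have unit := sin2_cos2 (2 * PI * t); rewrite /Rsqr in unit.
by rewrite /Cmod /e_ /= !Rmult_1_r Rplus_comm unit sqrt_1.
Qed.

Lemma pow_n_e t n : pow_n (e_ t) n = e_ (INR n * t).
Proof.
elim: n => [|n IH].
  by rewrite /e_ /= !Rmult_0_l Rmult_0_r cos_0 sin_0.
by rewrite S_INR Rmult_plus_distr_r Rmult_1_l Rplus_comm -e_add -IH.
Qed.

Lemma pow_n_RtoC r n : pow_n (RtoC r) n = RtoC (r ^ n).
Proof. by elim: n => [|n IH] //=; rewrite IH RtoC_mult. Qed.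

Lemma pow_n_Cmult (x y : C) n : pow_n (x * y)%C n = (pow_n x n * pow_n y n)%C.
Proof.
elim: n => [|n IH]; first by rewrite /= Cmult_1_l.
rewrite /= IH.
by change (x * y * (pow_n x n * pow_n y n) = x * pow_n x n * (y * pow_n y n))%C; ring.
Qed.

Lemma pow_n_pow_n {K : Ring} (x : K) a b : pow_n (pow_n x a) b = pow_n x (a * b).
Proof. by elim: b => [|b IH]; rewrite ?muln0 // mulnS pow_n_plus -IH. Qed.

Lemma pow_n_polar r t n :
  pow_n (RtoC r * e_ t)%C n = (RtoC (r ^ n) * e_ (INR n * t))%C.
Proof. by rewrite pow_n_Cmult pow_n_RtoC pow_n_e. Qed.

Lemma Cmod_polar r t : 0 <= r -> Cmod (RtoC r * e_ t) = r.
Proof. by move=> r_ge0; rewrite Cmod_mult Cmod_e Cmod_R Rmult_1_r Rabs_pos_eq. Qed.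

Lemma Cmod_one_sub_polar_sqr r t :
  Cmod (1 - RtoC r * e_ t)%C ^ 2 = (r - cos (2 * PI * t)) ^ 2 + sin (2 * PI * t) ^ 2.
Proof.
have unit := sin2_cos2 (2 * PI * t); rewrite /Rsqr in unit.
rewrite /Cmod pow2_sqrt; last by apply: Rplus_le_le_0_compat; apply: pow2_ge_0.
by rewrite /e_ /=; nra.
Qed.

Lemma Rabs_sin_le_Cmod_one_sub_polar r t :
  Rabs (sin (2 * PI * t)) <= Cmod (1 - RtoC r * e_ t)%C.
Proof.
apply: Rsqr_incr_0_var; last exact: Cmod_ge_0.
rewrite -Rsqr_abs !Rsqr_pow2 Cmod_one_sub_polar_sqr.
by have := pow2_ge_0 (r - cos (2 * PI * t)); lra.
Qed.

Lemma one_le_Cmod_one_sub_polar r t :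
  0 <= r -> cos (2 * PI * t) <= 0 -> 1 <= Cmod (1 - RtoC r * e_ t)%C.
Proof.
move=> r_ge0 cos_le0; apply: Rsqr_incr_0_var; last exact: Cmod_ge_0.
rewrite !Rsqr_pow2 Cmod_one_sub_polar_sqr.
by have := sin2_cos2 (2 * PI * t); rewrite !Rsqr_pow2; nra.
Qed.

Lemma Rabs_le_Cmod_one_sub_polar r s :
  0 <= r -> Rabs s <= / 2 -> Rabs s <= Cmod (1 - RtoC r * e_ s)%C.
Proof.
move=> r_ge0 s_half; have pi_lb := PI2_3_2; have pi_ub := PI_4.
have s_le := Rle_abs s; have s_ge := Rle_abs (- s); rewrite Rabs_Ropp in s_ge.
have [sin_abs cos_abs] : Rabs (sin (2 * PI * s)) = sin (2 * PI * Rabs s)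
                         /\ cos (2 * PI * s) = cos (2 * PI * Rabs s).
  case: (Rle_lt_dec 0 s) => s_sgn.
    by rewrite (Rabs_pos_eq s) // (Rabs_pos_eq (sin _)) //; apply: sin_ge_0; nra.
  have -> : 2 * PI * s = - (2 * PI * - s) by ring.
  rewrite (Rabs_left s) // sin_neg cos_neg Rabs_Ropp (Rabs_pos_eq (sin _)) //.
  by apply: sin_ge_0; nra.
case: (Rle_lt_dec (Rabs s) (/ 4)) => s_quarter.
  apply: (Rle_trans _ _ _ _ (Rabs_sin_le_Cmod_one_sub_polar r s)); rewrite sin_abs.
  have s_ge0 := Rabs_pos s.
  apply: (Rle_trans _ (2 * PI * Rabs s / 3)); first by nra.
  by apply: third_le_sin; nra.
apply: (Rle_trans _ 1); first by lra.
by apply: one_le_Cmod_one_sub_polar => //; rewrite cos_abs; apply: cos_le_0; nra.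
Qed.

Lemma dist_Z_le_Cmod_one_sub_polar r t delta :
  0 <= r -> (forall m : Z, delta <= Rabs (t - IZR m)) ->
  delta <= Cmod (1 - RtoC r * e_ t)%C.
Proof.
move=> r_ge0 far; have [m_lo m_hi] := Zfloor_bound (t + / 2).
set m := Zfloor (t + / 2) in m_lo m_hi *.
have -> : e_ t = e_ (t - IZR m) by rewrite -(e_shift_Z (t - IZR m) m); congr e_; ring.
apply: (Rle_trans _ _ _ (far m)).
by apply: Rabs_le_Cmod_one_sub_polar => //; apply: Rabs_le; lra.
Qed.

Lemma sum_n_m_Cmult_l (c : C) (f : nat -> C) m n :
  sum_n_m (fun k => c * f k)%C m n = (c * sum_n_m f m n)%C.
Proof. exact: sum_n_m_mult_l. Qed.

Lemma sum_n_m_RtoC_mul (f : nat -> R) (u : C) K :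
  sum_n_m (fun d => RtoC (f d) * u)%C 1 K = (RtoC (sum_n_m f 1 K) * u)%C.
Proof.
elim: K => [|K IH]; first by rewrite !sum_n_m_zero //; change (RtoC 0 = RtoC 0 * u)%C; ring.
rewrite !sum_n_Sm ?IH; try by apply/leP.
by change (RtoC (sum_n_m f 1 K) * u + RtoC (f K.+1) * u
           = RtoC (sum_n_m f 1 K + f K.+1) * u)%C; rewrite RtoC_plus; ring.
Qed.

Lemma Cmod_sum_n_m_le (f : nat -> C) (g : nat -> R) (m n : nat) :
  (forall k : nat, (m <= k)%coq_nat /\ (k <= n)%coq_nat -> Cmod (f k) <= g k) ->
  Cmod (sum_n_m f m n) <= sum_n_m g m n.
Proof.
(* [Cmod_norm] is stated for C seen as the normed R-module R * R. *)
move=> f_le; rewrite Cmod_norm; apply: (Rle_trans _ _ _ (@norm_sum_n_m _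
  (prod_NormedModule R_AbsRing R_NormedModule R_NormedModule) f m n)).
by apply: sum_n_m_le_loc => k /f_le; rewrite -Cmod_norm.
Qed.

Definition CSeries (f : nat -> C) : C :=
  (Series (fun n => fst (f n)), Series (fun n => snd (f n))).

Lemma fst_sum_n (f : nat -> C) N : fst (sum_n f N) = sum_n (fun n => fst (f n)) N.
Proof. by elim: N => [|N IH]; rewrite ?sum_O // !sum_Sn -IH. Qed.

Lemma snd_sum_n (f : nat -> C) N : snd (sum_n f N) = sum_n (fun n => snd (f n)) N.
Proof. by elim: N => [|N IH]; rewrite ?sum_O // !sum_Sn -IH. Qed.

Lemma ex_series_fst_snd (f : nat -> C) (g : nat -> R) :
  (forall n, Cmod (f n) <= g n) -> ex_series g ->
  ex_series (fun n => fst (f n)) /\ ex_series (fun n => snd (f n)).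
Proof.
move=> f_le g_sum.
have comp_le n : Rabs (fst (f n)) <= g n /\ Rabs (snd (f n)) <= g n.
  have := Rmax_Cmod (f n); have := Rmax_l (Rabs (fst (f n))) (Rabs (snd (f n))).
  by have := Rmax_r (Rabs (fst (f n))) (Rabs (snd (f n))); have := f_le n; lra.
by split; apply: (ex_series_le _ g) => // n; case: (comp_le n).
Qed.

Lemma sum_n_le_Series (g : nat -> R) N :
  (forall n, 0 <= g n) -> ex_series g -> sum_n g N <= Series g.
Proof.
move=> g_ge0 g_sum; apply: is_lim_seq_incr_compare; first exact: Series_correct.
by move=> n; rewrite sum_Sn; have := g_ge0 n.+1; rewrite /plus /=; lra.
Qed.

Lemma Series_geom_scal r c : Rabs r < 1 -> Series (fun n => c * r ^ n) = c / (1 - r).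
Proof. by move=> r_lt1; rewrite Series_scal_l (is_series_unique _ _ (is_series_geom r r_lt1)). Qed.

Lemma Cmod_sqr (c : C) : Cmod c * Cmod c = fst c * fst c + snd c * snd c.
Proof. by rewrite /Cmod sqrt_sqrt /=; nra. Qed.

Lemma Cmod_CSeries_le (f : nat -> C) (g : nat -> R) B :
  (forall n, Cmod (f n) <= g n) -> ex_series g ->
  (forall N, Cmod (sum_n f N) <= B) -> Cmod (CSeries f) <= B.
Proof.
move=> f_le g_sum partial_le; have [fst_sum snd_sum] := ex_series_fst_snd f_le g_sum.
have B_ge0 : 0 <= B := Rle_trans _ _ _ (Cmod_ge_0 _) (partial_le 0%N).
have fst_lim : is_lim_seq (sum_n (fun n => fst (f n))) (fst (CSeries f)).
  exact: Series_correct.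
have snd_lim : is_lim_seq (sum_n (fun n => snd (f n))) (snd (CSeries f)).
  exact: Series_correct.
have sq_le : Rbar_le (Cmod (CSeries f) * Cmod (CSeries f)) (B * B).
  have sq_lim := is_lim_seq_plus' _ _ _ _
    (is_lim_seq_mult' _ _ _ _ fst_lim fst_lim) (is_lim_seq_mult' _ _ _ _ snd_lim snd_lim).
  rewrite Cmod_sqr; apply: (is_lim_seq_le _ _ _ _ _ sq_lim (is_lim_seq_const (B * B))).
  move=> N; rewrite -fst_sum_n -snd_sum_n -Cmod_sqr.
  by have := partial_le N; have := Cmod_ge_0 (sum_n f N); nra.
by apply: Rsqr_incr_0_var => //; rewrite /Rsqr.
Qed.

Definition geom_sum (v : C) (M : nat) : C := sum_n_m (pow_n v) 1 M.

Lemma geom_sum_S v M : geom_sum v M.+1 = (geom_sum v M + pow_n v M.+1)%C.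
Proof. by rewrite /geom_sum sum_n_Sm //; apply/leP. Qed.

Lemma geom_sum_telescope v M : ((1 - v) * geom_sum v M = v - pow_n v M.+1)%C.
Proof.
elim: M => [|M IH].
  rewrite /geom_sum sum_n_m_zero; last by apply/leP.
  by change ((1 - v) * RtoC 0 = v - v * 1)%C; ring.
rewrite geom_sum_S Cmult_plus_distr_l IH.
by change (v - pow_n v M.+1 + (1 - v) * pow_n v M.+1 = v - v * pow_n v M.+1)%C; ring.
Qed.

Lemma Cmod_pow_n v n : Cmod (pow_n v n) = Cmod v ^ n.
Proof. by elim: n => [|n IH]; [exact: Cmod_1 | rewrite /= -IH -Cmod_mult]. Qed.

Lemma Cmod_geom_sum_le v M :
  Cmod v <= 1 -> Cmod (1 - v)%C * Cmod (geom_sum v M) <= 2 * Cmod v.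
Proof.
move=> v_le1; rewrite -Cmod_mult geom_sum_telescope.
have -> : (v - pow_n v M.+1 = v * (1 - pow_n v M))%C.
  by change (v - v * pow_n v M = v * (1 - pow_n v M))%C; ring.
rewrite Cmod_mult Rmult_comm; apply: Rmult_le_compat_r; first exact: Cmod_ge_0.
have pow_le1 : Cmod (pow_n v M) <= 1.
  by rewrite Cmod_pow_n -(pow1 M); apply: pow_incr; split => //; apply: Cmod_ge_0.
by apply: (Rle_trans _ _ _ (Cmod_triangle _ _)); rewrite Cmod_opp Cmod_1; lra.
Qed.

Lemma Cmod_geom_sum_le_ratio v M :
  Cmod v < 1 -> Cmod (geom_sum v M) <= 2 * Cmod v / (1 - Cmod v).
Proof.
move=> v_lt1; have key := Cmod_geom_sum_le M (Rlt_le _ _ v_lt1).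
have dist : 1 - Cmod v <= Cmod (1 - v)%C.
  have := Cmod_triangle (1 - v)%C v.
  have -> : (1 - v + v = 1)%C by ring.
  by rewrite Cmod_1; lra.
have G_ge0 := Cmod_ge_0 (geom_sum v M).
apply: (Rmult_le_reg_l (1 - Cmod v)); first by lra.
have -> : (1 - Cmod v) * (2 * Cmod v / (1 - Cmod v)) = 2 * Cmod v by field; lra.
by nra.
Qed.

Lemma Cmod_geom_sum_le_dist v M delta :
  Cmod v <= 1 -> 0 < delta -> delta <= Cmod (1 - v)%C -> Cmod (geom_sum v M) <= 2 / delta.
Proof.
move=> v_le1 delta_gt0 dist; have key := Cmod_geom_sum_le M v_le1.
have G_ge0 := Cmod_ge_0 (geom_sum v M).
apply: (Rmult_le_reg_l delta) => //.
have -> : delta * (2 / delta) = 2 by field; lra.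
by nra.
Qed.

Lemma sum_abs_mobius_pow (w : C) N K : (N <= K)%N ->
  sum_n_m (fun n => RtoC (abs_mobius n) * pow_n w n)%C 1 N
  = sum_n_m (fun d => RtoC (IZR (mobius d)) * geom_sum (pow_n w (d * d)) (N %/ (d * d)))%C 1 K.
Proof.
elim: N => [|N IH] NK.
  rewrite sum_n_m_zero; last by apply/leP.
  rewrite (sum_n_m_ext _ (fun _ => zero)) ?sum_n_m_const_zero // => d.
  rewrite div0n /geom_sum sum_n_m_zero; last by apply/leP.
  by change (RtoC (IZR (mobius d)) * RtoC 0 = RtoC 0)%C; ring.
rewrite sum_n_Sm; last by apply/leP.
rewrite IH; last by lia.
rewrite -(sum_mobius_sq_dvd (n := N.+1) (K := K)) // -sum_n_m_RtoC_mul -sum_n_m_plus.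
apply: sum_n_m_ext_loc => d [d_ge1 _].
have sq_gt0 : (0 < d * d)%N by apply/ltP; lia.
set G := geom_sum (pow_n w (d * d)).
rewrite divnS //; case: (boolP (d * d %| N.+1)%N) => [sq_dvd | _] /=; last first.
  by change (RtoC (IZR (mobius d)) * G (N %/ (d * d)) + RtoC 0 * pow_n w N.+1
             = RtoC (IZR (mobius d)) * G (N %/ (d * d)))%C; ring.
have quot_succ : (N.+1 %/ (d * d) = (N %/ (d * d)).+1)%N by rewrite divnS // sq_dvd.
rewrite add1n /G geom_sum_S pow_n_pow_n -quot_succ mulnC divnK //.
by rewrite /plus /= Cmult_plus_distr_l.
Qed.

Lemma reduced_fraction (r Q : nat) : (0 < r)%N -> (r < Q)%N ->
  exists q a, (1 <= a)%coq_nat /\ (a <= q)%coq_nat /\ (q <= Q)%N /\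
    Nat.gcd a q = 1%N /\ INR r / INR Q = INR a / INR q.
Proof.
move=> r_gt0 r_lt; set g := Nat.gcd r Q.
have [a r_eq] := Nat.gcd_divide_l r Q; have [q Q_eq] := Nat.gcd_divide_r r Q.
rewrite -/g in r_eq Q_eq.
have g_gt0 : (0 < g)%N.
  suff : g <> 0%N by lia.
  by move/Nat.gcd_eq_0_r; lia.
have cop : Nat.gcd a q = 1%N.
  have := Nat.gcd_mul_mono_r a q g; rewrite -r_eq -Q_eq -/g; nia.
exists q, a; do ![split; first by nia].
have g_pos : 0 < INR g by apply: lt_0_INR; apply/ltP.
have q_pos : 0 < INR q by apply: lt_0_INR; nia.
by rewrite r_eq Q_eq !mult_INR; field; lra.
Qed.

Lemma reduced_fraction_mod1 (m : Z) (Q : nat) : (0 < Q)%N ->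
  exists q a (k : Z), (1 <= a)%coq_nat /\ (a <= q)%coq_nat /\ (q <= Q)%N /\
    Nat.gcd a q = 1%N /\ IZR m / INR Q = INR a / INR q + IZR k.
Proof.
move=> Q_gt0; have QZ_gt0 : (0 < Z.of_nat Q)%Z by lia.
have Q_pos : 0 < INR Q by apply: lt_0_INR; apply/ltP.
have [r_ge0 r_lt] := Z.mod_pos_bound m _ QZ_gt0.
have m_eq := Z.div_mod m _ (Z.neq_sym _ _ (Z.lt_neq _ _ QZ_gt0)).
set r := (m mod Z.of_nat Q)%Z in r_ge0 r_lt m_eq; set k := (m / Z.of_nat Q)%Z in m_eq.
have -> : IZR m / INR Q = IZR r / INR Q + IZR k.
  by rewrite {1}m_eq plus_IZR mult_IZR -INR_IZR_INZ; field; lra.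
have [r0 | r_gt0] : r = 0%Z \/ (0 < r)%Z by lia.
  exists 1%N, 1%N, (k - 1)%Z; rewrite r0 minus_IZR /=.
  by do ![split; first by lia]; field; lra.
have [q [a [a_ge1 [a_le [q_le [cop frac]]]]]] :=
  @reduced_fraction (Z.to_nat r) Q ltac:(lia) ltac:(lia).
exists q, a, k; rewrite -frac (INR_IZR_INZ (Z.to_nat r)) Z2Nat.id //; lia.
Qed.

Lemma minor_arc_far_from_Z A X theta (Q : nat) (m : Z) :
  0 < X -> in_minor_arcs A X theta -> (0 < Q)%N -> INR Q <= Rpower (ln X) A ->
  Rpower (ln X) A / X <= Rabs (INR Q * theta - IZR m).
Proof.
(* Otherwise m / Q, in lowest terms a / q, is the centre of a major arc containing theta. *)
move=> X_gt0 [_ [_ not_major]] Q_gt0 Q_le; apply: Rnot_lt_le => close; apply: not_major.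
have [q [a [k [a_ge1 [a_le [q_le [cop frac]]]]]]] := reduced_fraction_mod1 m Q_gt0.
have Q_pos : 0 < INR Q by apply: lt_0_INR; apply/ltP.
have q_pos : 0 < INR q by apply: lt_0_INR; lia.
have qQ : INR q <= INR Q by apply: le_INR; apply/leP.
exists q, a, k; do ![split; first by [|lra]].
rewrite -frac; apply: (Rmult_lt_reg_l (INR Q)) => //.
have -> : INR Q * Rabs (theta - IZR m / INR Q) = Rabs (INR Q * theta - IZR m).
  rewrite -{1}(Rabs_pos_eq (INR Q)); last by lra.
  by rewrite -Rabs_mult; congr Rabs; field; lra.
apply: (Rlt_le_trans _ _ _ close).
have L_pos : 0 < Rpower (ln X) A by apply: exp_pos.
rewrite /Rdiv; apply: (Rmult_le_reg_r (INR q * X)); first by nra.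
by field_simplify; nra.
Qed.

Lemma Phi_term_eq z j n :
  Phi_term z j n = (RtoC (abs_mobius n / INR j) * pow_n z (j * n))%C.
Proof.
rewrite /Phi_term; case: (pow_n z (j * n)) => a b.
by apply: injective_projections; rewrite /= /prod_scal /= /scal /= /mult /=; ring.
Qed.

Section MinorArcs.

Variables (A X theta : R) (T : nat).
Hypothesis X_gt0 : 0 < X.
Hypothesis theta_minor : in_minor_arcs A X theta.
Hypothesis T_cube_le : INR T ^ 3 <= Rpower (ln X) A.

Let L := Rpower (ln X) A.
Let z := (RtoC (exp (- / X)) * e_ theta)%C.

Lemma L_gt0 : 0 < L.
Proof. exact: exp_pos. Qed.

Lemma rho_bounds : 0 < exp (- / X) < 1.
Proof.
split; first exact: exp_pos.
by rewrite -exp_0; apply: exp_increasing; have := Rinv_0_lt_compat X X_gt0; lra.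
Qed.

Lemma Cmod_geom_sum_pow_z_le k M :
  (0 < k)%N -> Cmod (geom_sum (pow_n z k) M) <= 2 * X / INR k.
Proof.
move=> k_gt0; have k_pos : 0 < INR k by apply: lt_0_INR; apply/ltP.
set u := INR k / X; have u_pos : 0 < u by apply: Rdiv_lt_0_compat.
have v_eq : pow_n z k = (RtoC (exp (- u)) * e_ (INR k * theta))%C.
  by rewrite pow_n_polar exp_pow /u; congr (RtoC (exp _) * _)%C; field; lra.
have v_mod : Cmod (pow_n z k) = exp (- u).
  by rewrite v_eq Cmod_polar //; apply: Rlt_le; apply: exp_pos.
have v_lt1 : exp (- u) < 1 by rewrite -exp_0; apply: exp_increasing; lra.
apply: (Rle_trans _ _ _ (Cmod_geom_sum_le_ratio _ _)); rewrite v_mod //.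
have -> : 2 * X / INR k = 2 * / u by rewrite /u; field; lra.
by rewrite /Rdiv Rmult_assoc; apply: Rmult_le_compat_l; [lra | apply: exp_neg_ratio_le].
Qed.

Lemma Cmod_geom_sum_pow_z_le_minor k M :
  (0 < k)%N -> INR k <= L -> Cmod (geom_sum (pow_n z k) M) <= 2 * X / L.
Proof.
move=> k_gt0 k_le; have L_pos := L_gt0.
have v_eq : pow_n z k = (RtoC (exp (- / X) ^ k) * e_ (INR k * theta))%C.
  exact: pow_n_polar.
have [r_ge0 r_lt1] : 0 <= exp (- / X) ^ k < 1.
  by apply: pow_lt_1_compat; [have := rho_bounds; lra | apply/ltP].
have far : L / X <= Cmod (1 - pow_n z k)%C.
  by rewrite v_eq; apply: dist_Z_le_Cmod_one_sub_polar => // m; apply: minor_arc_far_from_Z.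
have -> : 2 * X / L = 2 / (L / X) by field; lra.
apply: Cmod_geom_sum_le_dist => //; last by apply: Rdiv_lt_0_compat.
by rewrite v_eq Cmod_polar //; lra.
Qed.

(* Minor-arc estimate when j, d <= T (then j d^2 <= T^3 <= L), trivial estimate otherwise. *)
Definition bound_jd (j d : nat) : R :=
  2 * X / L * iverson ((j <= T) && (d <= T))%N
  + 2 * X / (INR j ^ 2 * INR d ^ 2) * (iverson (T < j)%N + iverson (T < d)%N).

Lemma inv_mul_Cmod_geom_sum_le_bound_jd j d M : (0 < j)%N -> (0 < d)%N ->
  / INR j * Cmod (geom_sum (pow_n z (j * (d * d))) M) <= bound_jd j d.
Proof.
move=> j_gt0 d_gt0; have L_pos := L_gt0.
have j_ge1 : 1 <= INR j by apply: (le_INR 1); apply/leP.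
have d_ge1 : 1 <= INR d by apply: (le_INR 1); apply/leP.
have k_gt0 : (0 < j * (d * d))%N by rewrite !muln_gt0 j_gt0 d_gt0.
have G_ge0 := Cmod_ge_0 (geom_sum (pow_n z (j * (d * d))) M).
have inv_j_pos : 0 < / INR j by apply: Rinv_0_lt_compat; lra.
have inv_j_le1 : / INR j <= 1 by rewrite -Rinv_1; apply: Rinv_le_contravar; lra.
have [iv_j iv_d] := (iverson_ge0 (T < j)%N, iverson_ge0 (T < d)%N).
have small_part_ge0 : 0 <= 2 * X / (INR j ^ 2 * INR d ^ 2).
  by apply: Rlt_le; apply: Rdiv_lt_0_compat; [lra | apply: Rmult_lt_0_compat; apply: pow_lt; lra].
rewrite /bound_jd; case: (boolP ((j <= T) && (d <= T))%N) => [/andP [jT dT] | far].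
  have k_le : INR (j * (d * d)) <= L.
    have [jT' dT'] : INR j <= INR T /\ INR d <= INR T by split; apply: le_INR; apply/leP.
    apply: (Rle_trans _ _ _ _ T_cube_le); rewrite !mult_INR.
    have -> : INR T ^ 3 = INR T * (INR T * INR T) by ring.
    by apply: Rmult_le_compat; try apply: Rmult_le_compat; nra.
  have G_le := Cmod_geom_sum_pow_z_le_minor M k_gt0 k_le.
  have := Rmult_le_pos _ _ small_part_ge0 (Rplus_le_le_0_compat _ _ iv_j iv_d).
  rewrite [iverson true]/iverson; nra.
have iv_sum : 1 <= iverson (T < j)%N + iverson (T < d)%N.
  by move: far; rewrite negb_and -!ltnNge /iverson; case: (T < j)%N; case: (T < d)%N => //= _; lra.
have G_le := Cmod_geom_sum_pow_z_le M k_gt0.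
have -> : iverson false = 0 by [].
have step : / INR j * (2 * X / INR (j * (d * d))) = 2 * X / (INR j ^ 2 * INR d ^ 2).
  by rewrite !mult_INR; field; lra.
by nra.
Qed.

Definition bound_j (j : nat) : R :=
  2 * X / L * INR T * iverson (j <= T)%N
  + 4 * X / INR j ^ 2 * (iverson (T < j)%N + / INR T.+1).

Lemma sum_bound_jd_le j D : (0 < j)%N -> sum_n_m (bound_jd j) 1 D <= bound_j j.
Proof.
move=> j_gt0; have L_pos := L_gt0.
have j_pos : 0 < INR j by apply: lt_0_INR; apply/ltP.
set c1 := 2 * X / L * iverson (j <= T)%N; set c2 := 2 * X / INR j ^ 2.
have c1_ge0 : 0 <= c1.
  by apply: Rmult_le_pos; [apply: Rlt_le; apply: Rdiv_lt_0_compat; lra | apply: iverson_ge0].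
have c2_ge0 : 0 <= c2 by apply: Rlt_le; apply: Rdiv_lt_0_compat; [lra | apply: pow_lt].
rewrite (sum_n_m_ext_loc _ (fun d => c1 * iverson (d <= T)%N
    + c2 * (iverson (T < j)%N * / INR d ^ 2 + iverson (T < d)%N / INR d ^ 2))); last first.
  move=> d [d_ge1 _]; have d_pos : 0 < INR d by apply: lt_0_INR; lia.
  by apply: Rminus_diag_uniq; rewrite /bound_jd /c1 /c2 iverson_andb; field; lra.
rewrite sum_n_m_Rplus !sum_n_m_Rmult_l sum_n_m_Rplus sum_n_m_Rmult_l.
have -> : bound_j j = c1 * INR T + c2 * (iverson (T < j)%N * 2 + 2 / INR T.+1).
  have T_pos : 0 < INR T.+1 by apply: lt_0_INR; lia.
  by rewrite /bound_j /c1 /c2; field; lra.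
apply: Rplus_le_compat; apply: Rmult_le_compat_l => //; first exact: sum_iverson_le.
apply: Rplus_le_compat; last exact: sum_inv_sq_tail_le.
by apply: Rmult_le_compat_l; [apply: iverson_ge0 | apply: sum_inv_sq_le].
Qed.

Lemma sum_bound_j_le J :
  sum_n_m bound_j 1 J <= 2 * X / L * INR T ^ 2 + 16 * X / INR T.+1.
Proof.
have L_pos := L_gt0; have T_pos : 0 < INR T.+1 by apply: lt_0_INR; lia.
rewrite (sum_n_m_ext_loc _ (fun j => 2 * X / L * INR T * iverson (j <= T)%N
    + 4 * X * (iverson (T < j)%N / INR j ^ 2 + / INR T.+1 * / INR j ^ 2))); last first.
  move=> j [j_ge1 _]; have j_pos : 0 < INR j by apply: lt_0_INR; lia.
  by apply: Rminus_diag_uniq; rewrite /bound_j; field; lra.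
rewrite sum_n_m_Rplus !sum_n_m_Rmult_l sum_n_m_Rplus sum_n_m_Rmult_l.
have -> : 2 * X / L * INR T ^ 2 + 16 * X / INR T.+1
          = 2 * X / L * INR T * INR T + 4 * X * (2 / INR T.+1 + / INR T.+1 * 2).
  by field; lra.
have c_ge0 : 0 <= 2 * X / L * INR T.
  by apply: Rmult_le_pos; [apply: Rlt_le; apply: Rdiv_lt_0_compat; lra | apply: pos_INR].
apply: Rplus_le_compat; apply: Rmult_le_compat_l; try lra; first exact: sum_iverson_le.
apply: Rplus_le_compat; first exact: sum_inv_sq_tail_le.
by apply: Rmult_le_compat_l; [apply: Rlt_le; apply: Rinv_0_lt_compat | apply: sum_inv_sq_le].
Qed.

Lemma Cmod_sum_Phi_term_le j N :
  (0 < j)%N -> Cmod (sum_n_m (Phi_term z j) 1 N) <= bound_j j.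
Proof.
move=> j_gt0; have j_pos : 0 < INR j by apply: lt_0_INR; apply/ltP.
apply: (Rle_trans _ (sum_n_m (bound_jd j) 1 N)); last exact: sum_bound_jd_le.
rewrite (sum_n_m_ext _ (fun n => RtoC (/ INR j) * (RtoC (abs_mobius n) * pow_n (pow_n z j) n)))%C;
  last by move=> n; rewrite Phi_term_eq pow_n_pow_n /Rdiv Rmult_comm RtoC_mult Cmult_assoc.
rewrite sum_n_m_Cmult_l (sum_abs_mobius_pow _ (leqnn N)) -sum_n_m_Cmult_l.
apply: Cmod_sum_n_m_le => d [d_ge1 _].
rewrite !Cmod_mult Cmod_R Rabs_pos_eq; last by apply: Rlt_le; apply: Rinv_0_lt_compat.
rewrite pow_n_pow_n Cmod_R.
have mu_le1 : Rabs (IZR (mobius d)) <= 1.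
  by case: (abs_mobius_0_or_1 d); rewrite /abs_mobius => ->; lra.
have mu_ge0 := Rabs_pos (IZR (mobius d)).
have G_ge0 := Cmod_ge_0 (geom_sum (pow_n z (j * (d * d))) (N %/ (d * d))).
have inv_j_G_ge0 := Rmult_le_pos _ _ (Rlt_le _ _ (Rinv_0_lt_compat _ j_pos)) G_ge0.
have d_gt0 : (0 < d)%N by apply/ltP.
have := inv_mul_Cmod_geom_sum_le_bound_jd (N %/ (d * d)) j_gt0 d_gt0.
by nra.
Qed.

Lemma Cmod_Phi_term_le j n :
  Cmod (Phi_term z j.+1 n.+1) <= exp (- / X) ^ j * exp (- / X) ^ n.
Proof.
have [rho_pos rho_lt1] := rho_bounds.
have j_ge1 : 1 <= INR j.+1 by apply: (le_INR 1); apply/leP.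
have mu_le1 : abs_mobius n.+1 <= 1 by case: (abs_mobius_0_or_1 n.+1) => ->; lra.
have mu_ge0 : 0 <= abs_mobius n.+1 by apply: Rabs_pos.
have coef_le1 : Rabs (abs_mobius n.+1 / INR j.+1) <= 1.
  rewrite Rabs_pos_eq; last first.
    by apply: Rmult_le_pos => //; apply: Rlt_le; apply: Rinv_0_lt_compat; lra.
  by apply: (Rmult_le_reg_r (INR j.+1)); [lra | field_simplify; lra].
rewrite Phi_term_eq Cmod_mult Cmod_R pow_n_polar Cmod_polar; last by apply: pow_le; lra.
rewrite -pow_add; have pow_ge0 : 0 <= exp (- / X) ^ (j.+1 * n.+1) by apply: pow_le; lra.
have := @pow_le_pow_le1 (exp (- / X)) (j + n)%coq_nat (j.+1 * n.+1) ltac:(lra) ltac:(nia).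
by have := Rabs_pos (abs_mobius n.+1 / INR j.+1); nra.
Qed.

Theorem Cmod_Phi_absmu_minor_le :
  Cmod (Phi_absmu z) <= 2 * X / L * INR T ^ 2 + 16 * X / INR T.+1.
Proof.
have [rho_pos rho_lt1] := rho_bounds; set rho := exp (- / X) in rho_pos rho_lt1 *.
have rho_abs : Rabs rho < 1 by rewrite Rabs_pos_eq; lra.
have geom_ex c : ex_series (fun n => c * rho ^ n).
  exact: (ex_series_scal_l c _ (ex_series_geom rho rho_abs)).
set inner := fun j => CSeries (fun n => Phi_term z j.+1 n.+1).
have inner_sum j N : sum_n (fun n => Phi_term z j.+1 n.+1) N = sum_n_m (Phi_term z j.+1) 1 N.+1.
  exact: sum_n_m_S.
have inner_le_geom j : Cmod (inner j) <= rho ^ j / (1 - rho).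
  apply: (Cmod_CSeries_le (g := fun n => rho ^ j * rho ^ n)) => // [n | N].
    exact: Cmod_Phi_term_le.
  rewrite -(Series_geom_scal (rho ^ j) rho_abs).
  apply: (Rle_trans _ _ _ (Cmod_sum_n_m_le (f := fun n => Phi_term z j.+1 n.+1)
                             (g := fun n => rho ^ j * rho ^ n) (fun n _ => Cmod_Phi_term_le j n))).
  by apply: sum_n_le_Series => // n; apply: Rmult_le_pos; apply: pow_le; lra.
have inner_le j : Cmod (inner j) <= bound_j j.+1.
  apply: (Cmod_CSeries_le (g := fun n => rho ^ j * rho ^ n)) => // [n | N].
    exact: Cmod_Phi_term_le.
  by rewrite inner_sum; apply: Cmod_sum_Phi_term_le.
change (Cmod (CSeries inner) <= 2 * X / L * INR T ^ 2 + 16 * X / INR T.+1).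
apply: (Cmod_CSeries_le (g := fun j => / (1 - rho) * rho ^ j)) => // [j | N].
  by rewrite Rmult_comm; apply: inner_le_geom.
apply: (Rle_trans _ _ _ (Cmod_sum_n_m_le (f := inner) (g := fun j => bound_j j.+1)
                           (fun j _ => inner_le j))).
by rewrite (sum_n_m_S bound_j); apply: sum_bound_j_le.
Qed.

End MinorArcs.

Lemma exists_nat_balance y : 1 <= y ->
  exists T : nat, INR T ^ 3 <= y ^ 4 /\ 2 * INR T ^ 2 / y ^ 4 + 16 / INR T.+1 <= 18 / y.
Proof.
move=> y_ge1; case: (nfloor_ex y ltac:(lra)) => T [T_le T_gt].
exists T; have T_ge0 := pos_INR T; rewrite S_INR; split.
  have -> : y ^ 4 = y ^ 3 * y by ring.
  apply: (Rle_trans _ (y ^ 3)); first by apply: pow_incr.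
  by have := pow_le y 3 ltac:(lra); nra.
have y_pos : 0 < y by lra.
have first_le : 2 * INR T ^ 2 / y ^ 4 <= 2 / y.
  apply: (Rmult_le_reg_r (y ^ 4)); first by apply: pow_lt.
  by field_simplify; [nra | lra | lra].
have second_le : 16 / (INR T + 1) <= 16 / y.
  by apply: Rmult_le_compat_l; [lra | apply: Rinv_le_contravar; lra].
by lra.
Qed.

Theorem lemma6p8 :
  forall A : R, 0 < A ->
  exists C X0 : R, 0 < C /\
    forall X : R, X0 <= X ->
    forall theta : R, in_minor_arcs A X theta ->
      Cmod (Phi_absmu (RtoC (exp (- / X)) * e_ theta)%C)
        <= C * X * Rpower (ln X) (10 - A / 4).
Proof.
move=> A A_gt0; exists 18, (exp 1); split; first by lra.
move=> X X_ge theta minor; have X_gt0 : 0 < X by have := exp_pos 1; lra.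
have l_ge1 : 1 <= ln X by rewrite -(ln_exp 1); apply: ln_le => //; apply: exp_pos.
set y := Rpower (ln X) (A / 4).
have y_ge1 : 1 <= y by rewrite -(Rpower_O (ln X)); [apply: Rle_Rpower; lra | lra].
have y4 : y ^ 4 = Rpower (ln X) A.
  by rewrite -Rpower_pow ?Rpower_mult /=; [congr Rpower; field | apply: exp_pos].
have [T [T_cube T_balance]] := exists_nat_balance y_ge1; rewrite y4 in T_cube T_balance.
apply: (Rle_trans _ _ _ (Cmod_Phi_absmu_minor_le X_gt0 minor T_cube)).
have y_inv : / y = Rpower (ln X) (- (A / 4)) by rewrite Rpower_Ropp.
have exponent_le : Rpower (ln X) (- (A / 4)) <= Rpower (ln X) (10 - A / 4).
  by apply: Rle_Rpower; lra.
have -> : 2 * X / Rpower (ln X) A * INR T ^ 2 + 16 * X / INR T.+1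
          = X * (2 * INR T ^ 2 / Rpower (ln X) A + 16 / INR T.+1).
  by field; split; [apply: not_0_INR | apply: Rgt_not_eq; apply: exp_pos].
rewrite (Rmult_comm 18) Rmult_assoc; apply: Rmult_le_compat_l; first by lra.
by move: T_balance; rewrite /Rdiv y_inv; lra.
Qed.
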